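(* Let $D$ be a delta-matroid on $[n,\overline{n}]$ and write $U_D(u,0)=a_n+a_{n-1}u+\dots+a_0u^n$. Then $(a_0,\dots,a_n)$ is the $f$-vector of a pure simplicial complex. In particular, $a_i\le a_{n-i}$ for all $i\le n/2$, and $a_0\le a_1\le\dots\le a_{\lfloor (n+1)/2\rfloor}$.
   Context: Let $[n,\overline{n}]=\{1,\dots,n,\overline{1},\dots,\overline{n}\}$ with involution $a\mapsto\overline{a}$; $\overline{S}=\{\overline{a}:a\in S\}$. A subset is admissible if it contains at most one of $i,\overline{i}$ for each $i$; $\operatorname{AdS}_n$ is the set of admissible subsets. In $\mathbb{R}^n$ set $e_{\overline{i}}=-e_i$, $e_S=\sum_{a\in S}e_a$. A delta-matroid $D$ on $[n,\overline{n}]$ is a nonempty collection $\mathcal{F}$ of admissible sets of size $n$ (feasible sets) such that $\operatorname{Conv}\{e_B:B\in\mathcal{F}\}$ has all edges parallel to some $e_i$ or $e_i\pm e_j$. Rank function: $g_D(S)=\max_{B\in\mathcal{F}}(|S\cap B|-|\overline{S}\cap B|)$. $U_D(u,v)=\sum_{S\in\operatorname{AdS}_n}u^{n-|S|}v^{(|S|-g_D(S))/2}$. The $f$-vector of a simplicial complex of dimension $n-1$ is $(f_{-1},f_0,\dots,f_{n-1})$, $f_i$ the number of $i$-dimensional faces (faces with $i+1$ vertices); a simplicial complex is pure if all its facets have the same dimension. *)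

From HB Require Import structures.
From mathcomp Require Import all_boot all_order all_algebra.
From mathcomp Require Import Rstruct.
From Stdlib Require Rdefinitions.
Notation R := Rdefinitions.R.
Set Implicit Arguments. Unset Strict Implicit. Unset Printing Implicit Defensive.
Import Order.TTheory GRing.Theory Num.Theory.
Local Open Scope ring_scope.

(* Ground set [n, nbar]: (i, false) encodes i, (i, true) encodes ibar. *)
Definition elt (n : nat) := ('I_n * bool)%type.
Definition bar {n} (a : elt n) : elt n := (a.1, ~~ a.2).
Definition barS {n} (S : {set elt n}) : {set elt n} := [set bar a | a in S].

Definition admissible {n} (S : {set elt n}) : bool :=
  [forall i : 'I_n, ~~ (((i, false) \in S) && ((i, true) \in S))].

Definition unitv n (i : 'I_n) : 'rV[R]_n := \row_j (if j == i then 1 else 0).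
Definition e_elt {n} (a : elt n) : 'rV[R]_n :=
  if a.2 then - unitv a.1 else unitv a.1.
Definition e_set {n} (S : {set elt n}) : 'rV[R]_n := \sum_(a in S) e_elt a.

Definition dotv {n} (c x : 'rV[R]_n) : R := \sum_j c 0 j * x 0 j.

(* [p, q] (p <> q, p q in P) is an edge of Conv P, P finite: the segment
   conv{p,q} is an exposed face, i.e. for some linear functional c the points
   of P maximizing c are exactly points of the segment [p, q]
   (so the face conv(argmax) is the segment [p,q]). *)
Definition is_edge {n} (P : seq 'rV[R]_n) (p q : 'rV[R]_n) : Prop :=
  p \in P /\ q \in P /\ p <> q /\
  exists c : 'rV[R]_n,
    dotv c p = dotv c q /\
    (forall x : 'rV[R]_n, x \in P -> dotv c x <= dotv c p) /\
    (forall x : 'rV[R]_n, x \in P -> dotv c x = dotv c p ->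
       exists t : R, 0 <= t <= 1 /\ x = (1 - t) *: p + t *: q).

Definition parallel {n} (x y : 'rV[R]_n) : Prop := exists t : R, x = t *: y.

Definition delta_matroid {n} (F : {set {set elt n}}) : Prop :=
  F != set0 /\
  (forall B : {set elt n}, B \in F -> admissible B /\ #|B| = n) /\
  (forall p q : 'rV[R]_n, is_edge [seq e_set B | B <- enum F] p q ->
     exists i j : 'I_n,
       parallel (q - p) (unitv i) \/
       parallel (q - p) (unitv i + unitv j) \/
       parallel (q - p) (unitv i - unitv j)).

Definition gval {n} (S B : {set elt n}) : int :=
  (#|S :&: B|%:Z - #|barS S :&: B|%:Z).
Definition rankD {n} (F : {set {set elt n}}) (S : {set elt n}) : int :=
  \big[Num.max/gval S (odflt set0 [pick B in F])]_(B in F) gval S B.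

Definition U_D {n} (F : {set {set elt n}}) (K : comNzRingType) (u v : K) : K :=
  \sum_(S : {set elt n} | admissible S)
     u ^+ (n - #|S|) * v ^+ ((absz (#|S|%:Z - rankD F S)) %/ 2).

Definition U_D_u0 {n} (F : {set {set elt n}}) : {poly int} := U_D F 'X 0.
Definition acoef {n} (F : {set {set elt n}}) (k : nat) : int := (U_D_u0 F)`_(n - k).

Definition simplicial_complex {m} (D : {set {set 'I_m}}) : Prop :=
  set0 \in D /\ (forall X Y : {set 'I_m}, X \in D -> Y \subset X -> Y \in D).
Definition facet {m} (D : {set {set 'I_m}}) (X : {set 'I_m}) : Prop :=
  X \in D /\ (forall Y : {set 'I_m}, Y \in D -> X \subset Y -> Y = X).
Definition pure {m} (D : {set {set 'I_m}}) : Prop :=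
  forall X Y : {set 'I_m}, facet D X -> facet D Y -> #|X| = #|Y|.
(* number of faces with k vertices, i.e. f_{k-1} *)
Definition nfaces {m} (D : {set {set 'I_m}}) (k : nat) : nat :=
  #|[set X in D | #|X| == k]|.
(* (a_0,...,a_n) is the f-vector (f_{-1},...,f_{n-1}) of D, D of dimension n-1 *)
Definition is_fvector_of {m} (D : {set {set 'I_m}}) (n : nat) (a : nat -> int) : Prop :=
  (forall X : {set 'I_m}, X \in D -> (#|X| <= n)%N) /\
  (forall k, (k <= n)%N -> (nfaces D k)%:Z = a k).

(* Setting [v = 0] kills every admissible [S] with [g_D(S) < |S|], and
   [g_D(S) = |S|] exactly when [S] lies in a feasible set [B]: otherwise some
   [a] in [S] misses [B], so [abar] is in [B] and
   [|S cap B| - |Sbar cap B| <= |S| - 2].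
   Hence [a_k] counts the [k]-subsets of feasible sets, i.e. the faces of size
   [k] of the complex generated by the feasible sets, which is pure since all
   of them have [n] elements.
   In such a complex double counting gives [a_i <= a_j] whenever [i <= j] and
   [i + j <= n], which yields both inequalities. *)

From HB Require Import structures.
From mathcomp Require Import all_boot all_order all_algebra.
From mathcomp Require Import zify.
Import Order.TTheory GRing.Theory Num.Theory.
Set Implicit Arguments. Unset Strict Implicit. Unset Printing Implicit Defensive.

Lemma double_count (I J : finType) (A : {set I}) (B : {set J}) (r : I -> J -> bool) :
  \sum_(x in A) #|[set y in B | r x y]| = \sum_(y in B) #|[set x in A | r x y]|.
Proof.
have card_sum (K : finType) (C : {set K}) (P : pred K) :
    #|[set z in C | P z]| = \sum_(z in C) P z.
  rewrite -sum1_card big_mkcond [RHS]big_mkcond /=.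
  by apply: eq_bigr => z _; rewrite inE; case: (z \in C) (P z) => [] [].
under eq_bigr => x _ do rewrite card_sum.
by rewrite exchange_big; apply: eq_bigr => y _; rewrite card_sum.
Qed.

Section GeneratedComplex.
Variables (T : finType) (FF : {set {set T}}).

Definition faces : {set {set T}} :=
  [set S : {set T} | [exists B in FF, S \subset B]].

Definition kfaces (D : {set {set T}}) (k : nat) : {set {set T}} :=
  [set X in D | #|X| == k].

Lemma facesP (S : {set T}) :
  reflect (exists2 B, B \in FF & S \subset B) (S \in faces).
Proof. by rewrite inE; apply: exists_inP. Qed.

Lemma faces_subset_closed (X Y : {set T}) : X \in faces -> Y \subset X -> Y \in faces.
Proof.
by case/facesP=> B BF XB YX; apply/facesP; exists B => //; apply: subset_trans XB.
Qed.

Lemma mem_faces (B : {set T}) : B \in FF -> B \in faces.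
Proof. by move=> BF; apply/facesP; exists B. Qed.

Variable n : nat.
Hypothesis card_FF : {in FF, forall B : {set T}, #|B| = n}.

Lemma card_faces_le (S : {set T}) : S \in faces -> #|S| <= n.
Proof. by case/facesP=> B BF SB; rewrite -(card_FF BF) subset_leq_card. Qed.

Lemma card_subfaces (Y : {set T}) i : Y \in faces ->
  #|[set X in kfaces faces i | X \subset Y]| = 'C(#|Y|, i).
Proof.
move=> Yf; rewrite -cards_draws; apply: eq_card => X; rewrite !inE.
case XY: (X \subset Y); rewrite ?andbF //= andbT.
by have := faces_subset_closed Yf XY; rewrite inE => ->.
Qed.

(* [Z |-> X :|: Z] embeds the [(j - i)]-subsets of [B :\: X], for a facet [B]
   containing [X], into the superfaces of [X] of size [j]. *)
Lemma card_superfaces_ge (X : {set T}) i j : X \in kfaces faces i -> i <= j ->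
  'C(n - i, j - i) <= #|[set Y in kfaces faces j | X \subset Y]|.
Proof.
rewrite inE => /andP[/facesP[B BF XB] /eqP cardX] le_ij.
pose Z := [set Z0 : {set T} | Z0 \subset B :\: X & #|Z0| == j - i].
have disjZ Z0 : Z0 \in Z -> [disjoint Z0 & X].
  by rewrite inE disjoints_subset => /andP[/subset_trans-> //]; rewrite setDE subsetIr.
have card_Z : #|Z| = 'C(n - i, j - i).
  by rewrite cards_draws cardsD (setIidPr XB) cardX card_FF.
rewrite -card_Z -(@card_in_imset _ _ (setU X)); last first.
  move=> Z1 Z2 /disjZ/setDidPl Z1X /disjZ/setDidPl Z2X eqU.
  by rewrite -Z1X -Z2X -[Z1 :\: X]set0U -[Z2 :\: X]set0U -(setDv X) -!setDUl eqU.
apply: subset_leq_card; apply/subsetP => _ /imsetP[Z0 Z0in ->].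
have := disjZ _ Z0in; move: Z0in; rewrite !inE => /andP[Z0BX /eqP cardZ0] dZ0X.
rewrite subsetUl andbT cardsU setIC disjoint_setI0 // cards0 subn0 cardX cardZ0.
rewrite subnKC // eqxx andbT; apply/exists_inP; exists B => //.
by rewrite subUset XB (subset_trans Z0BX) ?subsetDl.
Qed.

(* Double counting pairs [X \subset Y] of faces of sizes [i] and [j]: each [Y]
   contains ['C(j, i)] such [X], each [X] lies in at least ['C(n - i, j - i)]
   such [Y], and ['C(j, i) <= 'C(n - i, j - i)] as [j <= n - i]. *)
Lemma card_kfaces_mono i j : i <= j -> i + j <= n ->
  #|kfaces faces i| <= #|kfaces faces j|.
Proof.
move=> le_ij le_ijn.
have C_gt0 : 0 < 'C(n - i, j - i) by rewrite bin_gt0; lia.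
have le_bin : 'C(j, i) <= 'C(n - i, j - i) by rewrite -bin_sub // leq_bin2l //; lia.
rewrite -(leq_pmul2r C_gt0).
apply: (@leq_trans
  (\sum_(X in kfaces faces i) #|[set Y in kfaces faces j | X \subset Y]|)).
  by rewrite -sum_nat_const; apply: leq_sum => X Xi; apply: card_superfaces_ge.
apply: (@leq_trans (\sum_(Y in kfaces faces j) 'C(j, i))).
  rewrite double_count; apply: leq_sum => Y.
  by rewrite inE => /andP[Yf /eqP <-]; rewrite card_subfaces.
by rewrite sum_nat_const leq_mul2l le_bin orbT.
Qed.

End GeneratedComplex.

Lemma imset_can (T T' : finType) (f : T -> T') (g : T' -> T) (A : {set T}) :
  cancel f g -> g @: (f @: A) = A.
Proof. by move=> fK; rewrite -imset_comp (eq_imset _ fK) imset_id. Qed.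

Lemma faces_imset (T T' : finType) (f : T -> T') (g : T' -> T)
    (FF : {set {set T}}) :
  cancel f g -> cancel g f ->
  faces [set f @: B | B : {set T} in FF] = [set f @: S | S : {set T} in faces FF].
Proof.
move=> fK gK; apply/setP => S'.
apply/facesP/imsetP => [[_ /imsetP[B BF ->] S'B] | [S Sf ->]].
  exists (g @: S'); last by rewrite imset_can.
  by apply/facesP; exists B => //; rewrite -(imset_can B fK); apply: imsetS.
by case/facesP: Sf => B BF SB; exists (f @: B); [apply: imset_f | apply: imsetS].
Qed.

Lemma card_kfaces_imset (T T' : finType) (f : T -> T') (D : {set {set T}}) k :
  injective f ->
  #|kfaces [set f @: X | X : {set T} in D] k| = #|kfaces D k|.
Proof.
move=> f_inj.
suff -> : kfaces [set f @: X | X : {set T} in D] k =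
          [set f @: X | X : {set T} in kfaces D k].
  by rewrite card_imset //; apply: imset_inj.
apply/setP => X'; rewrite inE; apply/andP/imsetP => [[/imsetP[X XD ->]] | [X]].
  by rewrite card_imset // => cardX; exists X; rewrite // inE XD.
by rewrite inE => /andP[XD cardX] ->; rewrite card_imset // imset_f.
Qed.

Section ComplexOnOrdinals.
Variables (m n : nat) (FF : {set {set 'I_m}}).

Lemma faces_simplicial_complex : FF != set0 -> simplicial_complex (faces FF).
Proof.
case/set0Pn => B BF; split; last exact: faces_subset_closed.
by apply/facesP; exists B; rewrite ?sub0set.
Qed.

Lemma faces_pure : {in FF, forall B : {set 'I_m}, #|B| = n} -> pure (faces FF).
Proof.
move=> card_FF; suff card_facet X : facet (faces FF) X -> #|X| = n.
  by move=> X Y /card_facet-> /card_facet->.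
by case=> /facesP[B BF XB] Xmax; rewrite -(Xmax B (mem_faces BF) XB) card_FF.
Qed.
End ComplexOnOrdinals.

Section Admissible.
Variable n : nat.
Implicit Types (S B : {set elt n}) (a : elt n).

Lemma admissibleS S B : S \subset B -> admissible B -> admissible S.
Proof.
move=> SB /forallP admB; apply/forallP => i; apply: contra (admB i).
by case/andP=> iS ibS; rewrite !(subsetP SB).
Qed.

Lemma bar_notin_admissible B a : admissible B -> a \in B -> bar a \notin B.
Proof. by case: a => i [] /forallP/(_ i) admBi aB; move: admBi; rewrite aB ?andbT. Qed.

Lemma admissible_fst_inj S : admissible S -> {in S &, injective fst}.
Proof.
move=> admS [i x] [j y] aS bS /= eq_ij; subst j.
by case: x y aS bS => [] [] // aS bS; have := bar_notin_admissible admS aS; rewrite bS.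
Qed.

Lemma card_admissible_le S : admissible S -> (#|S| <= n)%N.
Proof.
move=> /admissible_fst_inj/card_in_imset <-.
by rewrite -[X in (_ <= X)%N](card_ord n) max_card.
Qed.

Lemma bar_in_full_admissible B a :
  admissible B -> #|B| = n -> a \notin B -> bar a \in B.
Proof.
move=> admB cardB aB.
have card_fstB : #|fst @: B| = n.
  by rewrite card_in_imset; [exact: cardB | exact: admissible_fst_inj].
have /eqP fstB : fst @: B == setT.
  by rewrite eqEcard subsetT cardsT card_ord /= -[X in (X <= _)%N]card_fstB.
have /imsetP[[j y] bB /= eq_ij] : a.1 \in fst @: B by rewrite fstB inE.
move: aB bB; case: a eq_ij => i x /= <-.
by case: x y => [] [] // /negbTE->.
Qed.
End Admissible.

Section Rank.
Local Open Scope ring_scope.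
Variables (n : nat) (F : {set {set elt n}}).
Implicit Types (S B : {set elt n}).

Lemma gval_le_card S B : gval S B <= #|S|%:Z.
Proof.
rewrite /gval lerBlDr (@le_trans _ _ #|S|%:Z) ?lerDl // lez_nat.
exact/subset_leq_card/subsetIl.
Qed.

Lemma gval_subset S B : admissible B -> S \subset B -> gval S B = #|S|%:Z.
Proof.
move=> admB SB; rewrite /gval (setIidPl SB).
suff -> : barS S :&: B = set0 by rewrite cards0 subr0.
apply/setP => x; rewrite !inE; apply/negP => /andP[/imsetP[a aS ->]].
exact/negP/(bar_notin_admissible admB)/(subsetP SB).
Qed.

(* A point [a] of [S] outside [B] costs [1] in [|S cap B|] and, since
   [abar] then lies in [B], another [1] through [|Sbar cap B|]. *)
Lemma gval_not_subset S B : admissible B -> #|B| = n -> ~~ (S \subset B) ->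
  gval S B <= #|S|%:Z - 2.
Proof.
move=> admB cardB /subsetPn[a aS aB].
have lt_SB : (#|S :&: B| < #|S|)%N.
  apply/proper_card/properP; split; first exact: subsetIl.
  by exists a; rewrite // inE (negbTE aB) andbF.
have barSB_gt0 : (0 < #|barS S :&: B|)%N.
  by apply/card_gt0P; exists (bar a); rewrite inE imset_f // bar_in_full_admissible.
by rewrite /gval; lia.
Qed.

Hypotheses (F_neq0 : F != set0) (F_ok : {in F, forall B, admissible B /\ #|B| = n}).

Lemma rankD_le S x : (forall B, B \in F -> gval S B <= x) -> rankD F S <= x.
Proof.
move=> le_x; rewrite /rankD; apply: bigmax_le => //.
case: pickP => [B /le_x // | F0 /=].
by case/set0Pn: F_neq0 => B; rewrite F0.
Qed.

Lemma rankD_faces S : S \in faces F -> rankD F S = #|S|%:Z.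
Proof.
case/facesP=> B BF SB; apply/eqP; rewrite eq_le; apply/andP; split.
  by apply: rankD_le => B' _; apply: gval_le_card.
by rewrite -(gval_subset (proj1 (F_ok BF)) SB) /rankD le_bigmax_cond.
Qed.

Lemma rankD_notin_faces S : S \notin faces F -> rankD F S <= #|S|%:Z - 2.
Proof.
move=> Snf; apply: rankD_le => B BF; have [admB cardB] := F_ok BF.
by apply: gval_not_subset => //; apply: contra Snf => SB; apply/facesP; exists B.
Qed.

Lemma corank_half_eq0 S :
  ((absz (#|S|%:Z - rankD F S) %/ 2)%N == 0%N) = (S \in faces F).
Proof.
have [Sf | Snf] := boolP (S \in faces F); first by rewrite rankD_faces // subrr.
by move: (rankD_notin_faces Snf); move: (rankD F S) => r; lia.
Qed.

Lemma faces_admissible S : S \in faces F -> admissible S.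
Proof. by case/facesP=> B /F_ok[admB _] SB; apply: admissibleS admB. Qed.

Lemma acoef_kfaces k : (k <= n)%N -> acoef F k = #|kfaces (faces F) k|%:Z.
Proof.
move=> le_kn; rewrite /acoef /U_D_u0 /U_D coef_sum.
rewrite (eq_bigr (fun S => ((S \in kfaces (faces F) k) : nat)%:R)) => [|S admS].
  rewrite -natr_sum natz -sum1_card big_mkcond [in RHS]big_mkcond; congr Posz.
  apply: eq_bigr => S _; case Skf: (S \in kfaces (faces F) k); last by case: ifP.
  by move: Skf; rewrite inE => /andP[/faces_admissible ->].
rewrite expr0n corank_half_eq0 [S \in kfaces _ _]inE.
case: (S \in faces F); last by rewrite mulr0 coef0.
by rewrite mulr1 coefXn eqn_sub2lE ?card_admissible_le // eq_sym.
Qed.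
End Rank.

Local Open Scope ring_scope.

Theorem corollary3p5 (n : nat) (F : {set {set elt n}}) :
  delta_matroid F ->
  (exists (m : nat) (D : {set {set 'I_m}}),
      simplicial_complex D /\ pure D /\ is_fvector_of D n (acoef F)) /\
  (forall i : nat, (i.*2 <= n)%N -> acoef F i <= acoef F (n - i)) /\
  (forall i j : nat, (i <= j <= (n.+1)./2)%N -> acoef F i <= acoef F j).
Proof.
move=> [F_neq0 [F_ok _]].
pose FF := [set enum_rank @: B | B : {set elt n} in F].
have card_FF : {in FF, forall B : {set 'I_#|{: elt n}|}, #|B| = n}.
  by move=> _ /imsetP[B /F_ok[_ cardB] ->]; rewrite card_imset //; apply: enum_rank_inj.
have acoef_FF k : (k <= n)%N -> acoef F k = #|kfaces (faces FF) k|%:Z.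
  move=> le_kn; rewrite acoef_kfaces // (faces_imset _ enum_rankK enum_valK).
  by rewrite card_kfaces_imset //; apply: enum_rank_inj.
have acoef_mono i j : (i <= j)%N -> (i + j <= n)%N -> acoef F i <= acoef F j.
  by move=> le_ij le_ijn; rewrite !acoef_FF ?lez_nat ?(card_kfaces_mono card_FF) //; lia.
split.
  exists #|{: elt n}|, (faces FF); split.
    by apply: faces_simplicial_complex; rewrite imset_eq0.
  split; first exact: faces_pure card_FF.
  by split=> [X /(card_faces_le card_FF) | k /acoef_FF ->].
split=> [i | i j /andP[le_ij le_jn]].
  by rewrite -muln2 => le_in; apply: acoef_mono; lia.
have [-> // | ne_ij] := eqVneq i j.
by apply: acoef_mono; have := odd_double_half n.+1; rewrite -muln2; lia.
Qed.
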